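(* The feasible SINR region of a multicast system is log-convex: the set $\log(\Upsilon)=\{(\log\mu_1,\dots,\log\mu_N):\boldsymbol\mu\in\Upsilon,\ \boldsymbol\mu>\mathbf 0\}$ is a convex subset of $\mathbb R^N$.
   Context: Multicast system: $N$ transmitters $T_1,\dots,T_N$; transmitter $T_i$ has $K_i\geq1$ receivers $R_i^{k}$, $k\in\mathcal K_i=\{1,\dots,K_i\}$. Channel gains $g_{r_i^{k},t_j}\geq 0$ (from $T_j$ to $R_i^k$) with $g_{r_i^{k},t_i}>0$, such that for every choice $k_i\in\mathcal K_i$ ($i=1,\dots,N$) the $N\times N$ matrix with $(i,j)$ entry $g_{r_i^{k_i},t_j}/g_{r_i^{k_i},t_i}$ for $j\neq i$ and $0$ on the diagonal is irreducible; noise variance $\sigma^2>0$. For $\mathbf p\geq\mathbf 0$: $\gamma_i^{k}(\mathbf p)=\frac{g_{r_i^{k},t_i}p_i}{\sum_{j\neq i}g_{r_i^{k},t_j}p_j+\sigma^2}$, $\gamma_i(\mathbf p)=\min_{k\in\mathcal K_i}\gamma_i^k(\mathbf p)$, $\Gamma(\mathbf p)=(\gamma_1(\mathbf p),\dots,\gamma_N(\mathbf p))$. The feasible SINR region is $\Upsilon=\{\Gamma(\mathbf p):\mathbf p\in\mathbb R^N,\mathbf p\geq\mathbf 0\}$. *)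

From Stdlib Require Import Reals Lra List.
Import ListNotations.
Open Scope R_scope.

(* Conventions: transmitters/receiver-groups indexed by i in {0..N-1};
   receivers of T_i indexed by k in {0..K i - 1};
   g i k j = channel gain from T_j to receiver R_i^k;
   vectors in R^N are functions nat -> R (only coordinates < N matter). *)

Definition interference (N : nat) (g : nat -> nat -> nat -> R) (p : nat -> R)
  (i k : nat) : R :=
  fold_right Rplus 0
    (map (fun j => if Nat.eq_dec j i then 0 else g i k j * p j) (seq 0 N)).

Definition sinr_k (N : nat) (g : nat -> nat -> nat -> R) (sigma2 : R)
  (p : nat -> R) (i k : nat) : R :=
  g i k i * p i / (interference N g p i k + sigma2).

Fixpoint min_upto (f : nat -> R) (n : nat) : R :=
  match n with
  | O => f O
  | S m => Rmin (min_upto f m) (f (S m))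
  end.

Definition sinr (N : nat) (K : nat -> nat) (g : nat -> nat -> nat -> R)
  (sigma2 : R) (p : nat -> R) (i : nat) : R :=
  min_upto (fun k => sinr_k N g sigma2 p i k) (K i - 1)%nat.

(* Irreducibility of a nonnegative N x N matrix A : strong connectivity of
   the directed graph with an edge i -> j iff A i j > 0
   (every i <> j reachable; 1x1 matrices are irreducible). *)
Inductive reach (N : nat) (A : nat -> nat -> R) : nat -> nat -> Prop :=
  | reach_step : forall i j, (i < N)%nat -> (j < N)%nat -> 0 < A i j ->
      reach N A i j
  | reach_trans : forall i j l, reach N A i j -> reach N A j l -> reach N A i l.

Definition irreducible (N : nat) (A : nat -> nat -> R) : Prop :=
  forall i j, (i < N)%nat -> (j < N)%nat -> i <> j -> reach N A i j.

(* The normalized cross-gain matrix for a receiver choice kc : i |-> k_i *)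
Definition gain_matrix (g : nat -> nat -> nat -> R) (kc : nat -> nat)
  : nat -> nat -> R :=
  fun i j => if Nat.eq_dec i j then 0 else g i (kc i) j / g i (kc i) i.

Definition in_log_region (N : nat) (K : nat -> nat) (g : nat -> nat -> nat -> R)
  (sigma2 : R) (x : nat -> R) : Prop :=
  exists p : nat -> R,
    (forall i, (i < N)%nat -> 0 <= p i) /\
    (forall i, (i < N)%nat -> 0 < sinr N K g sigma2 p i /\
                              x i = ln (sinr N K g sigma2 p i)).

(* Write a point of the log-region as log Γ(p) with p > 0 (a positive SINR
   forces a positive power).  For the weighted geometric mean p^t q^(1-t) of two
   such power vectors, Hölder's inequality bounds the noise-plus-interference by
   the geometric mean of the old ones, so every γ_i^k, hence every γ_i, is at
   least Γ_i(p)^t Γ_i(q)^(1-t).  It remains to see that the SINR region is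
   downward closed: the componentwise infimum of all powers below a given one
   that still meet a target μ > 0 meets it again (interference is monotone in
   the powers), and meets it with equality, since otherwise one of its powers
   could be lowered. *)

From Stdlib Require Import Reals Lra Lia List.
Open Scope R_scope.

Lemma ln_le_compat x y : 0 < x -> x <= y -> ln x <= ln y.
Proof. intros Hx [Hxy | <-]; [left; now apply ln_increasing | lra]. Qed.

Definition wgeom (t a b : R) : R := exp (t * ln a + (1 - t) * ln b).

Lemma wgeom_pos t a b : 0 < wgeom t a b.
Proof. apply exp_pos. Qed.

Lemma wgeom_same t a : 0 < a -> wgeom t a a = a.
Proof.
  intros Ha; unfold wgeom.
  replace (t * ln a + (1 - t) * ln a) with (ln a) by ring.
  now apply exp_ln.
Qed.

Lemma wgeom_mult t a b c d : 0 < a -> 0 < b -> 0 < c -> 0 < d ->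
  wgeom t (a * c) (b * d) = wgeom t a b * wgeom t c d.
Proof.
  intros; unfold wgeom; rewrite !ln_mult, <- exp_plus by assumption.
  f_equal; ring.
Qed.

Lemma wgeom_div t a b c d : 0 < a -> 0 < b -> 0 < c -> 0 < d ->
  wgeom t (a / c) (b / d) = wgeom t a b / wgeom t c d.
Proof.
  intros; unfold Rdiv, wgeom.
  rewrite !ln_mult, !ln_Rinv, <- exp_Ropp, <- exp_plus
    by (try apply Rinv_0_lt_compat; assumption).
  f_equal; ring.
Qed.

Lemma wgeom_le_compat t a b a' b' : 0 <= t <= 1 ->
  0 < a -> a <= a' -> 0 < b -> b <= b' -> wgeom t a b <= wgeom t a' b'.
Proof.
  intros Ht Ha Haa' Hb Hbb'; unfold wgeom.
  pose proof (ln_le_compat a a' Ha Haa'); pose proof (ln_le_compat b b' Hb Hbb').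
  destruct (Rle_lt_or_eq _ _ (ltac:(nra) : t * ln a + (1 - t) * ln b <=
                                           t * ln a' + (1 - t) * ln b'))
    as [Hlt | ->]; [left; now apply exp_increasing | lra].
Qed.

Lemma wgeom_le_arith t a b : 0 <= t <= 1 -> 0 < a -> 0 < b ->
  wgeom t a b <= t * a + (1 - t) * b.
Proof.
  intros Ht Ha Hb.
  set (L := t * ln a + (1 - t) * ln b).
  (* tangent line of exp at L *)
  assert (Htangent : forall c, 0 < c -> wgeom t a b * (1 + (ln c - L)) <= c).
  { intros c Hc. rewrite <- (exp_ln c) at 2 by exact Hc.
    replace (ln c) with (L + (ln c - L)) at 2 by ring.
    rewrite exp_plus. apply Rmult_le_compat_l; [left; apply exp_pos | apply exp_ineq1_le]. }
  assert (Hsum : t * (wgeom t a b * (1 + (ln a - L)))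
               + (1 - t) * (wgeom t a b * (1 + (ln b - L))) = wgeom t a b)
    by (unfold L; ring).
  pose proof (Htangent a Ha); pose proof (Htangent b Hb); nra.
Qed.

(* one term of Hölder's inequality, normalised by the sums A and B *)
Lemma wgeom_le_scaled t a b A B : 0 <= t <= 1 -> 0 < a -> 0 < b -> 0 < A -> 0 < B ->
  wgeom t a b <= wgeom t A B * (t * (a / A) + (1 - t) * (b / B)).
Proof.
  intros Ht Ha Hb HA HB.
  apply Rle_trans with (wgeom t A B * wgeom t (a / A) (b / B)).
  - rewrite wgeom_div by assumption.
    right; field; apply Rgt_not_eq, wgeom_pos.
  - apply Rmult_le_compat_l; [left; apply wgeom_pos |].
    apply wgeom_le_arith; auto; apply Rdiv_lt_0_compat; assumption.
Qed.

Lemma sum_map_le (f h : nat -> R) l : (forall j, In j l -> f j <= h j) ->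
  fold_right Rplus 0 (map f l) <= fold_right Rplus 0 (map h l).
Proof.
  induction l as [| j l IH]; simpl; intros Hfh; [lra |].
  apply Rplus_le_compat; [apply Hfh; now left | apply IH; intros; apply Hfh; now right].
Qed.

Lemma sum_map_lin (a b : R) (f h : nat -> R) l :
  fold_right Rplus 0 (map (fun j => a * f j + b * h j) l) =
  a * fold_right Rplus 0 (map f l) + b * fold_right Rplus 0 (map h l).
Proof. induction l as [| j l IH]; simpl; [| rewrite IH]; ring. Qed.

Definition upd (p : nat -> R) (i : nat) (v : R) : nat -> R :=
  fun j => if Nat.eq_dec j i then v else p j.

Section Interference.

Variables (N : nat) (g : nat -> nat -> nat -> R).

Lemma interference_le_compat p q i k :
  (forall j, (j < N)%nat -> 0 <= g i k j) ->
  (forall j, (j < N)%nat -> j <> i -> p j <= q j) ->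
  interference N g p i k <= interference N g q i k.
Proof.
  intros Hg Hpq; apply sum_map_le; intros j Hj; apply in_seq in Hj.
  destruct Nat.eq_dec; [lra |].
  apply Rmult_le_compat_l; [apply Hg | apply Hpq]; lia.
Qed.

Lemma interference_zero i k : interference N g (fun _ => 0) i k = 0.
Proof.
  unfold interference; induction (seq 0 N) as [| j l IH]; simpl; [| rewrite IH];
    [| destruct Nat.eq_dec]; ring.
Qed.

Lemma interference_nonneg p i k :
  (forall j, (j < N)%nat -> 0 <= g i k j) -> (forall j, (j < N)%nat -> 0 <= p j) ->
  0 <= interference N g p i k.
Proof.
  intros Hg Hp; rewrite <- (interference_zero i k).
  apply interference_le_compat; auto.
Qed.

Lemma interference_lin a b p q i k :
  interference N g (fun j => a * p j + b * q j) i k =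
  a * interference N g p i k + b * interference N g q i k.
Proof.
  unfold interference; rewrite <- sum_map_lin; f_equal.
  apply map_ext; intros j; destruct Nat.eq_dec; ring.
Qed.

Lemma interference_upd_self p i k v :
  interference N g (upd p i v) i k = interference N g p i k.
Proof.
  unfold interference; f_equal; apply map_ext; intros j; unfold upd.
  destruct Nat.eq_dec; reflexivity.
Qed.

(* Hölder's inequality, in the form of log-convexity of noise plus interference *)
Lemma interference_wgeom_le sigma2 t px py i k : 0 <= t <= 1 -> 0 < sigma2 ->
  (forall j, (j < N)%nat -> 0 <= g i k j) ->
  (forall j, (j < N)%nat -> 0 < px j) -> (forall j, (j < N)%nat -> 0 < py j) ->
  interference N g (fun j => wgeom t (px j) (py j)) i k + sigma2 <=
  wgeom t (interference N g px i k + sigma2) (interference N g py i k + sigma2).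
Proof.
  intros Ht Hs Hg Hx Hy.
  set (A := interference N g px i k + sigma2).
  set (B := interference N g py i k + sigma2).
  assert (HA : 0 < A).
  { pose proof (interference_nonneg px i k Hg (fun j Hj => Rlt_le _ _ (Hx j Hj))).
    unfold A; lra. }
  assert (HB : 0 < B).
  { pose proof (interference_nonneg py i k Hg (fun j Hj => Rlt_le _ _ (Hy j Hj))).
    unfold B; lra. }
  set (G := wgeom t A B).
  assert (Hinterf : interference N g (fun j => wgeom t (px j) (py j)) i k <=
                    G * t / A * interference N g px i k
                    + G * (1 - t) / B * interference N g py i k).
  { rewrite <- interference_lin. apply interference_le_compat; [exact Hg |].
    intros j Hj _.
    apply Rle_trans with (G * (t * (px j / A) + (1 - t) * (py j / B))).
    - apply wgeom_le_scaled; auto.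
    - right; field; lra. }
  assert (Hnoise : sigma2 <= G * (t * (sigma2 / A) + (1 - t) * (sigma2 / B))).
  { rewrite <- (wgeom_same t sigma2) at 1 by exact Hs. now apply wgeom_le_scaled. }
  assert (Htotal : G * t / A * interference N g px i k
                   + G * (1 - t) / B * interference N g py i k
                   + G * (t * (sigma2 / A) + (1 - t) * (sigma2 / B)) = G).
  { unfold A, B in *; field; lra. }
  lra.
Qed.

End Interference.

Lemma min_upto_le f n k : (k <= n)%nat -> min_upto f n <= f k.
Proof.
  induction n as [| n IH]; intros Hk; simpl.
  - replace k with 0%nat by lia; lra.
  - destruct (Nat.eq_dec k (S n)) as [-> | Hne]; [apply Rmin_r |].
    eapply Rle_trans; [apply Rmin_l | apply IH; lia].
Qed.

Lemma min_upto_attained f n : exists k, (k <= n)%nat /\ min_upto f n = f k.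
Proof.
  induction n as [| n [k [Hk E]]]; simpl; [now exists 0%nat |].
  unfold Rmin; destruct Rle_dec; [exists k | exists (S n)]; split; auto; lia.
Qed.

Section Sinr.

Variables (N : nat) (K : nat -> nat) (g : nat -> nat -> nat -> R) (sigma2 : R).
Hypothesis HK : forall i, (i < N)%nat -> (1 <= K i)%nat.
Hypothesis Hg_nonneg : forall i k j, (i < N)%nat -> (k < K i)%nat -> (j < N)%nat ->
  0 <= g i k j.
Hypothesis Hg_direct : forall i k, (i < N)%nat -> (k < K i)%nat -> 0 < g i k i.
Hypothesis Hsigma : 0 < sigma2.

Lemma noise_interference_pos p i k : (i < N)%nat -> (k < K i)%nat ->
  (forall j, (j < N)%nat -> 0 <= p j) -> 0 < interference N g p i k + sigma2.
Proof.
  intros Hi Hk Hp.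
  pose proof (interference_nonneg N g p i k (fun j => Hg_nonneg i k j Hi Hk) Hp).
  lra.
Qed.

Lemma sinr_le_sinr_k p i k : (k < K i)%nat ->
  sinr N K g sigma2 p i <= sinr_k N g sigma2 p i k.
Proof. intros Hk; apply min_upto_le; lia. Qed.

Lemma sinr_attained p i : (i < N)%nat ->
  exists k, (k < K i)%nat /\ sinr N K g sigma2 p i = sinr_k N g sigma2 p i k.
Proof.
  intros Hi; destruct (min_upto_attained (sinr_k N g sigma2 p i) (K i - 1))
    as [k [Hk E]].
  exists k; split; [specialize (HK i Hi); lia | exact E].
Qed.

Lemma le_sinr_k_iff m p i k : (i < N)%nat -> (k < K i)%nat ->
  (forall j, (j < N)%nat -> 0 <= p j) ->
  m <= sinr_k N g sigma2 p i k <->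
  m * (interference N g p i k + sigma2) <= g i k i * p i.
Proof.
  intros Hi Hk Hp; pose proof (noise_interference_pos p i k Hi Hk Hp) as HD.
  unfold sinr_k; split; intros H.
  - apply Rmult_le_compat_r with (r := interference N g p i k + sigma2) in H;
      [| lra].
    unfold Rdiv in H; rewrite Rmult_assoc, Rinv_l, Rmult_1_r in H; lra.
  - apply Rmult_le_reg_r with (interference N g p i k + sigma2); [exact HD |].
    unfold Rdiv; rewrite Rmult_assoc, Rinv_l, Rmult_1_r; lra.
Qed.

Lemma sinr_pos p i : (i < N)%nat -> (forall j, (j < N)%nat -> 0 <= p j) ->
  0 < p i -> 0 < sinr N K g sigma2 p i.
Proof.
  intros Hi Hp Hpi; destruct (sinr_attained p i Hi) as [k [Hk ->]].
  apply Rdiv_lt_0_compat; [apply Rmult_lt_0_compat; auto |].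
  now apply noise_interference_pos.
Qed.

Lemma power_pos_of_sinr_pos p i : (i < N)%nat ->
  (forall j, (j < N)%nat -> 0 <= p j) ->
  0 < sinr N K g sigma2 p i -> 0 < p i.
Proof.
  intros Hi Hp Hs; destruct (Rle_lt_or_eq _ _ (Hp i Hi)) as [| Hpi]; [assumption |].
  assert (HK0 : (0 < K i)%nat) by (specialize (HK i Hi); lia).
  pose proof (sinr_le_sinr_k p i 0 HK0) as Hle.
  unfold sinr_k in Hle; rewrite <- Hpi, Rmult_0_r, Rdiv_0_l in Hle; lra.
Qed.

Lemma sinr_k_wgeom_ge t px py i k : 0 <= t <= 1 -> (i < N)%nat -> (k < K i)%nat ->
  (forall j, (j < N)%nat -> 0 < px j) -> (forall j, (j < N)%nat -> 0 < py j) ->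
  wgeom t (sinr_k N g sigma2 px i k) (sinr_k N g sigma2 py i k) <=
  sinr_k N g sigma2 (fun j => wgeom t (px j) (py j)) i k.
Proof.
  intros Ht Hi Hk Hx Hy.
  pose proof (Hg_direct i k Hi Hk).
  assert (HDx := noise_interference_pos px i k Hi Hk (fun j Hj => Rlt_le _ _ (Hx j Hj))).
  assert (HDy := noise_interference_pos py i k Hi Hk (fun j Hj => Rlt_le _ _ (Hy j Hj))).
  assert (HD := noise_interference_pos (fun j => wgeom t (px j) (py j)) i k Hi Hk
                  (fun j _ => Rlt_le _ _ (wgeom_pos t (px j) (py j)))).
  unfold sinr_k; rewrite wgeom_div, wgeom_mult, wgeom_same;
    try apply Rmult_lt_0_compat; auto.
  unfold Rdiv; apply Rmult_le_compat_l.
  - apply Rmult_le_pos; [lra | left; apply wgeom_pos].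
  - apply Rinv_le_contravar; [exact HD |].
    apply interference_wgeom_le; auto.
Qed.

Lemma sinr_wgeom_ge t px py i : 0 <= t <= 1 -> (i < N)%nat ->
  (forall j, (j < N)%nat -> 0 < px j) -> (forall j, (j < N)%nat -> 0 < py j) ->
  wgeom t (sinr N K g sigma2 px i) (sinr N K g sigma2 py i) <=
  sinr N K g sigma2 (fun j => wgeom t (px j) (py j)) i.
Proof.
  intros Ht Hi Hx Hy.
  destruct (sinr_attained (fun j => wgeom t (px j) (py j)) i Hi) as [k [Hk ->]].
  eapply Rle_trans; [| apply sinr_k_wgeom_ge; auto].
  apply wgeom_le_compat; auto using sinr_le_sinr_k;
    apply sinr_pos; auto; intros j Hj; left; auto.
Qed.

Lemma sinr_k_le_compat p q i k : (i < N)%nat -> (k < K i)%nat ->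
  (forall j, (j < N)%nat -> 0 <= q j) -> 0 <= p i -> q i = p i ->
  (forall j, (j < N)%nat -> j <> i -> q j <= p j) ->
  sinr_k N g sigma2 p i k <= sinr_k N g sigma2 q i k.
Proof.
  intros Hi Hk Hq Hpi Hqi Hqp.
  pose proof (Hg_direct i k Hi Hk).
  unfold sinr_k, Rdiv; rewrite Hqi; apply Rmult_le_compat_l; [nra |].
  apply Rinv_le_contravar; [now apply noise_interference_pos |].
  apply Rplus_le_compat_r, interference_le_compat; auto.
Qed.

Lemma sinr_k_upd_scale p i k c :
  sinr_k N g sigma2 (upd p i (c * p i)) i k = c * sinr_k N g sigma2 p i k.
Proof.
  unfold sinr_k; rewrite interference_upd_self; unfold upd.
  destruct Nat.eq_dec; [unfold Rdiv; ring | contradiction].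
Qed.

Lemma pointwise_inf (S : (nat -> R) -> Prop) p0 : S p0 ->
  (forall p j, S p -> 0 <= p j) ->
  exists ps, (forall p j, S p -> ps j <= p j) /\
             (forall j c, (forall p, S p -> c <= p j) -> c <= ps j).
Proof.
  intros Hp0 Hnonneg.
  assert (Hlub : forall j, {m | is_lub (fun r => exists p, S p /\ r = - p j) m}).
  { intros j; apply completeness.
    - exists 0; intros r [p [Hp Hr]]; subst r; specialize (Hnonneg p j Hp); lra.
    - now exists (- p0 j), p0. }
  exists (fun j => - proj1_sig (Hlub j)); split.
  - intros p j Hp; destruct (proj2_sig (Hlub j)) as [Hub _].
    enough (- p j <= proj1_sig (Hlub j)) by lra. apply Hub; eauto.
  - intros j c Hc; destruct (proj2_sig (Hlub j)) as [_ Hleast].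
    enough (proj1_sig (Hlub j) <= - c) by lra.
    apply Hleast; intros r [p [Hp Hr]]; subst r; specialize (Hc p Hp); lra.
Qed.

Section LeastPower.

Variables (mu p0 : nat -> R).
Hypothesis Hmu : forall i, (i < N)%nat -> 0 < mu i.

Definition supporting (p : nat -> R) : Prop :=
  (forall j, 0 <= p j <= p0 j) /\
  (forall i, (i < N)%nat -> mu i <= sinr N K g sigma2 p i).

(* μ_i (I_k(p) + σ²) <= g_ii^k p_i only gets easier as the other powers decrease,
   so it passes from the supporting powers to their infimum *)
Lemma supporting_inf ps : supporting p0 ->
  (forall p j, supporting p -> ps j <= p j) ->
  (forall j c, (forall p, supporting p -> c <= p j) -> c <= ps j) ->
  supporting ps.
Proof.
  intros Hp0 Hlow Hglb.
  assert (Hps : forall j, 0 <= ps j <= p0 j).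
  { intros j; split; [apply Hglb; intros p [Hb _]; apply Hb | now apply Hlow]. }
  split; [exact Hps |]; intros i Hi.
  destruct (sinr_attained ps i Hi) as [k [Hk ->]].
  pose proof (Hg_direct i k Hi Hk).
  apply le_sinr_k_iff; auto; [intros j _; apply Hps |].
  enough (Hdiv : mu i * (interference N g ps i k + sigma2) / g i k i <= ps i).
  { apply Rmult_le_compat_r with (r := g i k i) in Hdiv; [| lra].
    unfold Rdiv in Hdiv; rewrite Rmult_assoc, Rinv_l, Rmult_1_r in Hdiv; lra. }
  apply Hglb; intros p [Hb Hsupp].
  assert (Hp : mu i * (interference N g p i k + sigma2) <= g i k i * p i).
  { apply le_sinr_k_iff; auto; [intros j _; apply Hb |].
    eapply Rle_trans; [apply Hsupp; auto | now apply sinr_le_sinr_k]. }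
  assert (interference N g ps i k <= interference N g p i k).
  { apply interference_le_compat; [intros j Hj; apply Hg_nonneg; auto |].
    intros j _ _; apply Hlow; now split. }
  apply Rmult_le_reg_r with (g i k i); [assumption |].
  unfold Rdiv; rewrite Rmult_assoc, Rinv_l, Rmult_1_r by lra.
  pose proof (Hmu i Hi); nra.
Qed.

(* if Γ_i exceeded μ_i, scaling p_i by μ_i / Γ_i would give a smaller
   supporting power *)
Lemma least_supporting_sinr_eq ps : supporting ps ->
  (forall p j, supporting p -> ps j <= p j) ->
  forall i, (i < N)%nat -> sinr N K g sigma2 ps i = mu i.
Proof.
  intros [Hb Hsupp] Hleast i Hi.
  apply Rle_antisym; [| now apply Hsupp]; apply Rnot_lt_le; intros Hlt.
  pose proof (Hmu i Hi) as Hmui.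
  assert (Hps0 : forall j, (j < N)%nat -> 0 <= ps j) by (intros j _; apply Hb).
  assert (Hpsi : 0 < ps i) by (apply (power_pos_of_sinr_pos ps i); auto; lra).
  set (s := sinr N K g sigma2 ps i) in *.
  assert (Hc : 0 < mu i / s < 1).
  { split; [apply Rdiv_lt_0_compat; lra |].
    apply Rmult_lt_reg_r with s; [lra |].
    unfold Rdiv; rewrite Rmult_assoc, Rinv_l; lra. }
  set (q := upd ps i (mu i / s * ps i)).
  assert (Hqle : forall j, q j <= ps j).
  { intros j; unfold q, upd; destruct Nat.eq_dec; [subst; nra | lra]. }
  assert (Hq0 : forall j, 0 <= q j).
  { intros j; unfold q, upd; destruct Nat.eq_dec; [nra | apply Hb]. }
  assert (Hq : supporting q).
  { split; [intros j; split; [apply Hq0 | eapply Rle_trans; [apply Hqle | apply Hb]] |].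
    intros i' Hi'; destruct (sinr_attained q i' Hi') as [k [Hk ->]].
    destruct (Nat.eq_dec i' i) as [-> | Hne].
    - unfold q; rewrite sinr_k_upd_scale.
      replace (mu i) with (mu i / s * s) at 1 by (field; lra).
      apply Rmult_le_compat_l; [lra | now apply sinr_le_sinr_k].
    - eapply Rle_trans; [apply Hsupp; assumption |].
      eapply Rle_trans; [apply sinr_le_sinr_k; exact Hk |].
      apply sinr_k_le_compat; auto.
      unfold q, upd; destruct Nat.eq_dec; [contradiction | reflexivity]. }
  pose proof (Hleast q i Hq) as Hpsq.
  unfold q, upd in Hpsq; destruct Nat.eq_dec; [nra | contradiction].
Qed.

End LeastPower.

Lemma sinr_region_downward mu p : (forall j, 0 <= p j) ->
  (forall i, (i < N)%nat -> 0 < mu i <= sinr N K g sigma2 p i) ->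
  exists q, (forall j, 0 <= q j) /\
            (forall i, (i < N)%nat -> sinr N K g sigma2 q i = mu i).
Proof.
  intros Hp Hmu.
  assert (Hmu_pos : forall i, (i < N)%nat -> 0 < mu i) by (intros i Hi; apply Hmu, Hi).
  assert (Hp_supp : supporting mu p p)
    by (split; [intros j; split; [apply Hp | lra] | apply Hmu]).
  destruct (pointwise_inf (supporting mu p) p Hp_supp) as [ps [Hlow Hglb]];
    [intros q j [Hb _]; apply Hb |].
  pose proof (supporting_inf mu p Hmu_pos ps Hp_supp Hlow Hglb) as Hps.
  exists ps; split; [intros j; apply Hps |].
  now apply (least_supporting_sinr_eq mu p).
Qed.

End Sinr.

Theorem theorem5 (N : nat) (K : nat -> nat) (g : nat -> nat -> nat -> R)
  (sigma2 : R)
  (HN : (1 <= N)%nat)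
  (HK : forall i, (i < N)%nat -> (1 <= K i)%nat)
  (Hg_nonneg : forall i k j, (i < N)%nat -> (k < K i)%nat -> (j < N)%nat ->
      0 <= g i k j)
  (Hg_direct : forall i k, (i < N)%nat -> (k < K i)%nat -> 0 < g i k i)
  (Hirr : forall kc : nat -> nat, (forall i, (i < N)%nat -> (kc i < K i)%nat) ->
      irreducible N (gain_matrix g kc))
  (Hsigma : 0 < sigma2) :
  forall (x y : nat -> R) (t : R),
    in_log_region N K g sigma2 x -> in_log_region N K g sigma2 y ->
    0 <= t <= 1 ->
    in_log_region N K g sigma2 (fun i => t * x i + (1 - t) * y i).
Proof.
  intros x y t [px [Hpx0 Hx]] [py [Hpy0 Hy]] Ht.
  assert (Hpx : forall j, (j < N)%nat -> 0 < px j)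
    by (intros j Hj; apply (power_pos_of_sinr_pos N K g sigma2); auto; apply Hx, Hj).
  assert (Hpy : forall j, (j < N)%nat -> 0 < py j)
    by (intros j Hj; apply (power_pos_of_sinr_pos N K g sigma2); auto; apply Hy, Hj).
  destruct (sinr_region_downward N K g sigma2 HK Hg_nonneg Hg_direct Hsigma
              (fun i => exp (t * x i + (1 - t) * y i)) (fun j => wgeom t (px j) (py j)))
    as [q [Hq Hsinr]].
  - intros j; left; apply wgeom_pos.
  - intros i Hi; split; [apply exp_pos |].
    destruct (Hx i Hi) as [_ ->], (Hy i Hi) as [_ ->].
    apply (sinr_wgeom_ge N K g sigma2); auto.
  - exists q; split; [intros j _; apply Hq |].
    intros i Hi; rewrite Hsinr by exact Hi.
    split; [apply exp_pos | now rewrite ln_exp].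
Qed.
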